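(* Let $m,n\geq 1$ be integers and set $k_0:=n$. Then, as an identity of rational functions in $x$, \[ \sum_{k=1}^{n}\binom{n}{k}\frac{(m-x)_k(x-1)_{n-k}}{(x-m)_{m+n-1}k^m} =\sum_{1\leq k_{m-1}\leq\cdots\leq k_1\leq n}\frac{\sum_{j=1}^{k_{m-1}-1}\frac{1}{x+j-m}-\sum_{j=1}^{k_{m-1}}\frac{1}{j}}{k_1k_2\cdots k_{m-1} (x+k_1-2)(x+k_2-3)\cdots(x+k_{m-1}-m)}, \] where for $m=1$ the outer sum is the single term with empty products equal to $1$ and $k_0=n$.
   Context: $(x)_N=x(x+1)\cdots(x+N-1)$ denotes the rising factorial, with $(x)_0=1$. *)

From HB Require Import structures.
From mathcomp Require Import all_boot all_order all_algebra fraction.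
Set Implicit Arguments. Unset Strict Implicit. Unset Printing Implicit Defensive.
Import Order.TTheory GRing.Theory Num.Theory.
Local Open Scope ring_scope.

Definition ratfun := {fraction {poly rat}}.
Definition xF : ratfun := tofrac ('X : {poly rat}).

Definition rising (R : comNzRingType) (x : R) (N : nat) : R :=
  \prod_(i < N) (x + i%:R).

(* A chain 1 <= k_p <= ... <= k_1 <= n (p = m-1) is encoded by
   t : {ffun 'I_p -> 'I_n}, with k_i = (t (i-1)).+1 for 1 <= i <= p;
   k_0 = n by convention. *)
Definition kk (n p : nat) (t : {ffun 'I_p -> 'I_n}) (i : nat) : nat :=
  if i is i'.+1 then
    (if insub i' is Some j then (t j).+1 else n)
  else n.

Definition chain (n p : nat) (t : {ffun 'I_p -> 'I_n}) : bool :=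
  [forall i : 'I_p, forall j : 'I_p, (i <= j)%N ==> (t j <= t i)%N].

From HB Require Import structures.
From mathcomp Require Import all_boot all_order all_algebra fraction.
From mathcomp Require Import ring.
Import Order.TTheory GRing.Theory Num.Theory.
Local Open Scope ring_scope.

(* Write B_m(x, n) for the left-hand side and S_m(x, n) for the chain sum, where
   k_0 := n.  Both satisfy the recursion
     F_{m+1}(x, n) = \sum_(k = 1..n) F_m(x - 1, k) / (k (x + k - 2)).
   For S this is the decomposition of a chain by its largest entry k_1.  For B,
   the contiguity relation between (x-1)_(j+1), (x-1)_j and (x-2)_(j+1) gives
     B_{m+1}(x, n+1) - B_{m+1}(x, n) = B_m(x - 1, n + 1) / ((n+1) (x+n-1)),
   which telescopes to the recursion.  At m = 1 both equal
   \sum_(0 < j < n) 1/(x+j-1) - H_n: for S by definition, for B by the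
   Vandermonde convolution of rising factorials, which evaluates B_0.
   All of this holds in any field of characteristic 0 at any x with x + z <> 0
   for every integer z, in particular at the indeterminate of Q(x). *)

Section Rising.
Context {R : comNzRingType}.
Implicit Types x y : R.

Lemma rising0 x : rising x 0 = 1.
Proof. by rewrite /rising big_ord0. Qed.

Lemma risingS x N : rising x N.+1 = rising x N * (x + N%:R).
Proof. by rewrite /rising big_ord_recr. Qed.

Lemma risingSl x N : rising x N.+1 = x * rising (x + 1) N.
Proof.
rewrite /rising big_ord_recl addr0; congr (_ * _).
by apply: eq_bigr => i _; rewrite lift0 -nat1r addrA.
Qed.

Lemma risingDn x y n :
  rising (x + y) n = \sum_(k < n.+1) 'C(n, k)%:R * rising x k * rising y (n - k).
Proof.
elim: n => [|n IHn]; first by rewrite big_ord1 !rising0 mul1r mulr1.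
have split_factor (k : 'I_n.+1) :
    'C(n, k)%:R * rising x k * rising y (n - k) * (x + y + n%:R) =
    'C(n, k)%:R * rising x k.+1 * rising y (n - k)
    + 'C(n, k)%:R * rising x k * rising y (n.+1 - k).
  have le_kn : (k <= n)%N by rewrite -ltnS.
  by rewrite risingS subSn // risingS natrB //; ring.
rewrite risingS IHn mulr_suml (eq_bigr _ (fun k _ => split_factor k)) big_split /=.
rewrite [in RHS]big_ord_recl /= subn0 bin0 !rising0 mul1r.
under [in RHS]eq_bigr => i _ do rewrite binS natrD !mulrDl subSS.
rewrite big_split /= [X in _ = _ + X]addrC addrCA; congr (_ + _).
rewrite [in RHS]big_ord_recr /= bin_small // !mul0r addr0.
by rewrite [in LHS]big_ord_recl /= bin0 rising0 subn0 !mul1r.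
Qed.

End Rising.

Section FfunCons.
Context {T : finType}.

Definition ffun_cons {p} (a : T) (t : {ffun 'I_p -> T}) : {ffun 'I_p.+1 -> T} :=
  [ffun i => if unlift ord0 i is Some j then t j else a].

Lemma ffun_cons0 p a (t : {ffun 'I_p -> T}) : ffun_cons a t ord0 = a.
Proof. by rewrite ffunE unlift_none. Qed.

Lemma ffun_cons_lift p a (t : {ffun 'I_p -> T}) j : ffun_cons a t (lift ord0 j) = t j.
Proof. by rewrite ffunE liftK. Qed.

Lemma sum_ffun_cons (V : nmodType) p (P : pred {ffun 'I_p.+1 -> T})
    (f : {ffun 'I_p.+1 -> T} -> V) :
  \sum_(t | P t) f t
  = \sum_(a : T) \sum_(t : {ffun 'I_p -> T} | P (ffun_cons a t)) f (ffun_cons a t).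
Proof.
rewrite pair_big_dep /= (reindex (fun u : T * {ffun 'I_p -> T} => ffun_cons u.1 u.2)) //.
apply: onW_bij; exists (fun t : {ffun 'I_p.+1 -> T} => (t ord0, [ffun j => t (lift ord0 j)])).
  move=> [a t] /=; rewrite ffun_cons0; congr (_, _); apply/ffunP => j.
  by rewrite ffunE ffun_cons_lift.
move=> t; apply/ffunP => i; case: (unliftP ord0 i) => [j|] ->.
  by rewrite ffun_cons_lift ffunE.
by rewrite ffun_cons0.
Qed.

End FfunCons.

Section Chains.
Context {N : nat}.
Implicit Types (n p : nat) (a : 'I_N).

(* [kseq n t] is [kk t] with [k_0 := n] in place of the size [N] of the codomain. *)
Definition kseq n {p} (t : {ffun 'I_p -> 'I_N}) (i : nat) : nat :=
  if i is i'.+1 then (if insub i' is Some j then (t j).+1 else n) else n.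

Definition bounded_chain n {p} (t : {ffun 'I_p -> 'I_N}) : bool :=
  chain t && [forall i, t i < n]%N.

Lemma kseqS n p (t : {ffun 'I_p -> 'I_N}) i (lt_ip : (i < p)%N) :
  kseq n t i.+1 = (t (Ordinal lt_ip)).+1.
Proof. by rewrite /kseq insubT /=; congr (t _).+1; apply: val_inj. Qed.

Lemma kseq_cons n p a (t : {ffun 'I_p -> 'I_N}) i : (i <= p)%N ->
  kseq n (ffun_cons a t) i.+1 = kseq a.+1 t i.
Proof.
move=> le_ip; rewrite (kseqS n _ (ffun_cons a t) _ le_ip).
case: i le_ip => [|i] lt_ip.
  by rewrite (_ : Ordinal _ = ord0) ?ffun_cons0 //; apply: val_inj.
rewrite (kseqS a.+1 _ t _ lt_ip).
by rewrite (_ : Ordinal _ = lift ord0 (Ordinal lt_ip)) ?ffun_cons_lift //; apply: val_inj.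
Qed.

Lemma bounded_chain_cons n p a (t : {ffun 'I_p -> 'I_N}) :
  bounded_chain n (ffun_cons a t) = (a < n)%N && bounded_chain a.+1 t.
Proof.
rewrite /bounded_chain /chain; apply/idP/idP.
  case/andP => /forallP desc /forallP bnd.
  have lt_an : (a < n)%N by have := bnd ord0; rewrite ffun_cons0.
  rewrite lt_an /=; apply/andP; split.
    apply/forallP => i; apply/forallP => j; apply/implyP => le_ij.
    have /forallP/(_ (lift ord0 j))/implyP := desc (lift ord0 i).
    by rewrite !ffun_cons_lift; apply.
  apply/forallP => i; rewrite ltnS.
  have /forallP/(_ (lift ord0 i))/implyP := desc ord0.
  by rewrite ffun_cons_lift ffun_cons0; apply.
case/and3P => lt_an /forallP desc /forallP bnd; apply/andP; split.
  apply/forallP => i; apply/forallP => j; apply/implyP.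
  case: (unliftP ord0 i) => [i'|] ->; case: (unliftP ord0 j) => [j'|] -> //=.
  - rewrite /bump /= !add1n ltnS => le_ij; rewrite !ffun_cons_lift.
    by have /forallP/(_ j')/implyP := desc i'; apply.
  - by move=> _; rewrite ffun_cons_lift ffun_cons0 -ltnS.
apply/forallP => i; case: (unliftP ord0 i) => [i'|] ->.
  by rewrite ffun_cons_lift (leq_trans _ lt_an) // -ltnS.
by rewrite ffun_cons0.
Qed.

End Chains.

Section RationalIdentity.
Context {F : fieldType}.
Implicit Types x y : F.

Definition nonint x := forall z : int, x + z%:~R != 0.

Lemma nonint_subr1 x : nonint x -> nonint (x - 1).
Proof. by move=> hx z; rewrite -addrA -[- 1](intrN _ 1) -intrD hx. Qed.

Lemma nonint_addnsubn x a b : nonint x -> x + a%:R - b%:R != 0.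
Proof. by move/(_ (a%:Z - b%:Z)); rewrite intrB !pmulrn addrA. Qed.

Lemma rising_subn_neq0 x c N : nonint x -> rising (x - c%:R) N != 0.
Proof.
by move=> hx; apply/prodf_neq0 => i _; rewrite addrAC nonint_addnsubn.
Qed.

Hypothesis F0 : [pchar F] =i pred0.

Lemma natrS_neq0 k : k.+1%:R != 0 :> F.
Proof. by rewrite ((pcharf0P F).1 F0). Qed.

Definition binom_term m x n k : F :=
  'C(n, k)%:R * rising (m%:R - x) k * rising (x - 1) (n - k)
    / (rising (x - m%:R) (m + n - 1) * k%:R ^+ m).

Definition binom_sum m x n : F := \sum_(1 <= k < n.+1) binom_term m x n k.

Lemma rising_contiguity x k j :
  (k + j.+1)%:R * rising (x - 1) j.+1
    - j.+1%:R * (x + (k + j.+1)%:R - 2%:R) * rising (x - 1) j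
  = k%:R * rising (x - 2%:R) j.+1 :> F.
Proof.
rewrite risingS risingSl (_ : x - 2%:R + 1 = x - 1); last by ring.
by rewrite !natrD; ring.
Qed.

Lemma binom_termS q x n k : nonint x -> (0 < k <= n.+1)%N ->
  binom_term q.+1 x n.+1 k - binom_term q.+1 x n k =
  binom_term q (x - 1) n.+1 k / (n.+1%:R * (x + n.+1%:R - 2%:R)).
Proof.
move=> hx /andP[k_gt0 le_kn1]; rewrite /binom_term.
have [j def_n] : exists j, n.+1 = (k + j)%N by exists (n.+1 - k)%N; rewrite subnKC.
have sub_n1k : (n.+1 - k = j)%N by rewrite def_n addKn.
have binE : 'C(n, k)%:R = j%:R * 'C(n.+1, k)%:R / n.+1%:R :> F.
  apply: (mulIf (natrS_neq0 n)); rewrite mulfVK ?natrS_neq0 // -!natrM mulnC.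
  by have := mul_bin_down n.+1 k; rewrite /= sub_n1k => ->.
have D_neq0 : rising (x - q.+1%:R) (q + n) != 0 by exact: rising_subn_neq0.
have E_neq0 : x + n.+1%:R - 2%:R != 0 by apply: nonint_addnsubn.
have K_neq0 : k%:R != 0 :> F by rewrite -(prednK k_gt0) natrS_neq0.
have -> : (q.+1 + n.+1 - 1 = (q + n).+1)%N by rewrite addSn addnS subn1.
have -> : (q.+1 + n - 1 = q + n)%N by rewrite addSn subn1.
have -> : (q + n.+1 - 1 = q + n)%N by rewrite addnS subn1.
have -> : x - 1 - q%:R = x - q.+1%:R by rewrite -natr1; ring.
have -> : q%:R - (x - 1) = q.+1%:R - x by rewrite -natr1; ring.
have -> : x - 1 - 1 = x - 2%:R by ring.
rewrite risingS binE exprSr.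
have -> : x - q.+1%:R + (q + n)%:R = x + n.+1%:R - 2%:R.
  by rewrite natrD -!natr1; ring.
rewrite sub_n1k; case: j def_n binE sub_n1k => [|j] def_n binE _.
  rewrite addn0 in def_n; rewrite !mul0r subr0 !rising0 -def_n in K_neq0 *.
  set E := x + _ - _ in E_neq0 *.
  by field; rewrite nat1r D_neq0 E_neq0 K_neq0 (expf_neq0 q K_neq0).
have sub_nk : (n - k = j)%N by move: def_n; rewrite addnS => -[->]; rewrite addKn.
have := rising_contiguity x k j; rewrite -def_n => contiguity.
rewrite sub_nk -(mulKf K_neq0 (rising (x - 2%:R) j.+1)) -contiguity.
set E := x + _ - _ in E_neq0 *.
by field; rewrite nat1r natrS_neq0 D_neq0 E_neq0 K_neq0 (expf_neq0 q K_neq0).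
Qed.

Lemma binom_sumS q x n : nonint x ->
  binom_sum q.+1 x n.+1 =
  binom_sum q.+1 x n + binom_sum q (x - 1) n.+1 / (n.+1%:R * (x + n.+1%:R - 2%:R)).
Proof.
move=> hx; rewrite /binom_sum mulr_suml.
have -> : \sum_(1 <= k < n.+1) binom_term q.+1 x n k
          = \sum_(1 <= k < n.+2) binom_term q.+1 x n k.
  by rewrite [in RHS]big_nat_recr //= /binom_term bin_small // !mul0r addr0.
apply/eqP; rewrite addrC -subr_eq -sumrB; apply/eqP/eq_big_nat => k k_range.
exact: binom_termS.
Qed.

Lemma binom_sum0 y n : nonint y -> binom_sum 0 y n.+1 = (n != 0%N)%:R - y.
Proof.
move=> hy; rewrite /binom_sum.
under eq_bigr => k _ do rewrite /binom_term expr0 mulr1.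
rewrite -mulr_suml add0n subn1 /= subr0.
pose a k := 'C(n.+1, k)%:R * rising (0%:R - y) k * rising (y - 1) (n.+1 - k).
have -> : \sum_(1 <= k < n.+2) a k = rising (-1) n.+1 - rising (y - 1) n.+1.
  have := risingDn (0%:R - y) (y - 1) n.+1.
  rewrite (_ : 0%:R - y + (y - 1) = -1); last by ring.
  rewrite -(big_mkord xpredT a) big_ltn // /a bin0 subn0 rising0 !mul1r => ->.
  by rewrite [RHS]addrC addKr.
have D_neq0 : rising y n != 0 by have := rising_subn_neq0 y 0 n hy; rewrite subr0.
rewrite [rising (y - 1) _]risingSl (_ : y - 1 + 1 = y); last by ring.
case: n {a} D_neq0 => [|n] D_neq0.
  by rewrite !rising0 risingS rising0 /= divr1; ring.
rewrite [rising (-1) _]risingSl [rising (-1 + 1) _]risingSl addNr mul0r mulr0.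
by rewrite sub0r mulNr mulfK // opprB.
Qed.

Definition harmonic_diff x n : F :=
  \sum_(1 <= j < n) (x + j%:R - 1)^-1 - \sum_(1 <= j < n.+1) (j%:R)^-1.

Lemma binom_sum1 x n : nonint x -> binom_sum 1 x n = harmonic_diff x n.
Proof.
move=> hx; elim: n => [|n IHn]; first by rewrite /binom_sum /harmonic_diff !big_geq ?subr0.
rewrite binom_sumS // IHn (binom_sum0 _ _ (nonint_subr1 _ hx)).
rewrite /harmonic_diff; case: n IHn => [|n] _.
  rewrite big_nat1 !big_geq //=.
  by field; rewrite oner_neq0 (nonint_addnsubn x 1 2 hx).
rewrite [X in _ = X - _](big_nat_recr n.+1) // [X in _ = _ - X](big_nat_recr n.+2) //=.
by field; rewrite nat1r -natrD natrS_neq0 (nonint_addnsubn x n.+1 1 hx).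
Qed.

Definition nest (f : F -> nat -> F) x n : F :=
  \sum_(1 <= k < n.+1) f (x - 1) k / (k%:R * (x + k%:R - 2%:R)).

Lemma binom_sum_nest q x n : nonint x -> binom_sum q.+1 x n = nest (binom_sum q) x n.
Proof.
move=> hx; elim: n => [|n IHn]; first by rewrite /binom_sum /nest !big_geq.
by rewrite binom_sumS // IHn /nest [in RHS]big_nat_recr.
Qed.

Definition chain_term x p (k : nat -> nat) : F :=
  (\sum_(1 <= j < k p) (x + j%:R - p.+1%:R)^-1 - \sum_(1 <= j < (k p).+1) (j%:R)^-1)
  / \prod_(1 <= i < p.+1) ((k i)%:R * (x + (k i)%:R - i.+1%:R)).

Lemma chain_term_shift x p (k k' : nat -> nat) :
    (forall i, (i <= p)%N -> k i.+1 = k' i) ->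
  chain_term x p.+1 k
  = chain_term (x - 1) p k' / ((k' 0%N)%:R * (x + (k' 0%N)%:R - 2%:R)).
Proof.
move=> k_shift; rewrite /chain_term k_shift // big_ltn // big_add1 /= k_shift //.
have -> : \prod_(1 <= i < p.+1) ((k i.+1)%:R * (x + (k i.+1)%:R - i.+2%:R))
        = \prod_(1 <= i < p.+1) ((k' i)%:R * (x - 1 + (k' i)%:R - i.+1%:R)).
  by apply: eq_big_nat => i /andP[_ lt_ip]; rewrite (k_shift i lt_ip); ring.
rewrite invfM mulrA mulrAC; congr (_ / _ / _); congr (_ - _).
by apply: eq_bigr => j _; congr (_^-1); ring.
Qed.

Variable N : nat.

Definition chain_sum p x n : F :=
  \sum_(t : {ffun 'I_p -> 'I_N} | bounded_chain n t) chain_term x p (kseq n t).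

Lemma chain_sum0 x n : chain_sum 0 x n = harmonic_diff x n.
Proof.
rewrite /chain_sum (big_pred1 (ffun0 (card_ord 0))); last first.
  move=> t; rewrite /bounded_chain /chain /=.
  have -> : t == ffun0 (card_ord 0) by apply/eqP/ffunP => -[].
  by apply/andP; split; apply/forallP => -[].
by rewrite /chain_term big_geq // divr1.
Qed.

Lemma chain_sumS p x n : (n <= N)%N -> chain_sum p.+1 x n = nest (chain_sum p) x n.
Proof.
move=> le_nN; rewrite /chain_sum sum_ffun_cons.
have peel (a : 'I_N) :
    \sum_(t : {ffun 'I_p -> 'I_N} | bounded_chain n (ffun_cons a t))
       chain_term x p.+1 (kseq n (ffun_cons a t))
    = if (a < n)%N then chain_sum p (x - 1) a.+1 / (a.+1%:R * (x + a.+1%:R - 2%:R))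
      else 0.
  under eq_bigl => t do rewrite bounded_chain_cons.
  case: ifP => lt_an; last by rewrite big_pred0.
  rewrite /chain_sum mulr_suml; apply: eq_bigr => t _.
  by apply: chain_term_shift => i le_ip; exact: kseq_cons.
rewrite (eq_bigr _ (fun a _ => peel a)) -big_mkcond /= (big_ord_narrow le_nN) /=.
pose b a := chain_sum p (x - 1) a.+1 / (a.+1%:R * (x + a.+1%:R - 2%:R)).
by rewrite -(big_mkord xpredT b) /nest big_add1.
Qed.

Lemma binom_sum_chain_sum p x n : nonint x -> (n <= N)%N ->
  binom_sum p.+1 x n = chain_sum p x n.
Proof.
elim: p x n => [|p IHp] x n hx le_nN; first by rewrite binom_sum1 // chain_sum0.
rewrite binom_sum_nest // chain_sumS //; apply: eq_big_nat => k /andP[_ lt_kn].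
by rewrite (IHp _ _ (nonint_subr1 _ hx) (leq_trans (lt_kn : k <= n)%N le_nN)).
Qed.

End RationalIdentity.

Lemma pchar_ratfun : [pchar ratfun] =i pred0.
Proof.
apply/pcharf0P => n; rewrite -(rmorph_nat (@tofrac _)) tofrac_eq0.
by rewrite -polyC_natr polyC_eq0 pnatr_eq0.
Qed.

Lemma nonint_xF : nonint xF.
Proof.
move=> z; rewrite /xF -[z%:~R : ratfun](rmorph_int (@tofrac _)) -(rmorph_int polyC).
by rewrite -rmorphD tofrac_eq0 -size_poly_eq0 size_XaddC.
Qed.

Theorem corollary5p2 (m n : nat) (hm : (1 <= m)%N) (hn : (1 <= n)%N) :
  \sum_(1 <= k < n.+1)
     ('C(n, k)%:R * rising (m%:R - xF) k * rising (xF - 1) (n - k)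
       / (rising (xF - m%:R) (m + n - 1) * (k%:R) ^+ m))
  =
  \sum_(t : {ffun 'I_(m - 1) -> 'I_n} | chain t)
     ((\sum_(1 <= j < kk t (m - 1)) (xF + j%:R - m%:R)^-1
        - \sum_(1 <= j < (kk t (m - 1)).+1) (j%:R : ratfun)^-1)
      / \prod_(1 <= i < m)
          ((kk t i)%:R * (xF + (kk t i)%:R - (i.+1)%:R))).
Proof.
case: m hm => [//|p] _.
rewrite -[LHS]/(binom_sum p.+1 xF n) [(p.+1 - 1)%N]subn1 succnK.
rewrite (binom_sum_chain_sum pchar_ratfun _ _ _ _ nonint_xF (leqnn n)).
apply: eq_bigl => t; apply/andb_idr => _; apply/forallP => i; exact: ltn_ord.
Qed.
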